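(* Let $t_{kl}\ge0$ for $(k,l)\neq(0,0)$, let $\mathcal{G}=\sum_{k,l}t_{kl}\mathcal{L}_{kl}$ and $\Phi=e^{\mathcal{G}}\in\mathcal{A}_N^Q$. Then $\mathcal{D}_h(\mathcal{G})=\sum_{k=1}^{N-1}t_k\mathcal{K}_k$ with $t_k=\sum_lt_{kl}$, and $$\mathcal{D}_h\big(e^{\mathcal{G}}\big)=e^{\mathcal{D}_h(\mathcal{G})}=\exp\Big(\sum_{k=1}^{N-1}t_k\mathcal{K}_k\Big);$$ in particular the circulant bistochastic matrix $\mathcal{D}_h(\Phi)$ belongs to $\mathcal{A}_N^C$ (hyper-decoherence commutes with the semigroup time evolution).
   Context: Let $N\ge2$, $\omega=e^{2\pi i/N}$, $X|j\rangle=|j\oplus1\rangle$ (addition mod $N$), $Z=\mathrm{diag}(1,\omega,\dots,\omega^{N-1})$, Weyl unitaries $U_{kl}=X^kZ^l$. Superoperators are $N^2\times N^2$ matrices acting on $|A\rangle\rangle=\sum A_{ij}|i\rangle|j\rangle$ ($\rho\mapsto K\rho K^\dagger$ corresponds to $K\otimes\overline K$). $\mathcal{L}_{kl}=U_{kl}\otimes\overline{U}_{kl}-\mathbb{I}_{N^2}$; $\mathcal{A}_N^Q$ is the set of $\exp(\sum_{(k,l)\ne(0,0)}t_{kl}\mathcal{L}_{kl})$ with $t_{kl}\ge0$. Hyper-decoherence of a superoperator $M$ is the $N\times N$ matrix $\mathcal{D}_h(M)_{ij}=\langle ii|M|jj\rangle$. $\mathcal{K}_k=X^k-\mathbb{I}_N$,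 and $\mathcal{A}_N^C$ is the set of $\exp(\sum_{k=1}^{N-1}t_k\mathcal{K}_k)$ with $t_k\ge0$. *)

From HB Require Import structures.
From mathcomp Require Import all_boot all_order all_algebra.
From mathcomp Require Import reals topology normedtype sequences exp trigo.
From mathcomp Require Import complex mxtens.
Set Implicit Arguments.
Unset Strict Implicit.
Unset Printing Implicit Defensive.
Import Order.TTheory GRing.Theory Num.Theory.
Import numFieldTopology.Exports numFieldNormedType.Exports.
Local Open Scope ring_scope.
Local Open Scope complex_scope.

Section Defs.
Variable R : realType.
Local Notation C := R[i].

Definition omega (N : nat) : C :=
  cos (2 * pi / N%:R) +i* sin (2 * pi / N%:R).

Definition shiftX (N : nat) : 'M[C]_N :=
  \matrix_(i, j) ((i : nat) == (j.+1 %% N)%N)%:R.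

Definition clockZ (N : nat) : 'M[C]_N :=
  \matrix_(i, j) (((i : nat) == j)%:R * omega N ^+ i).

(* matrix powers for arbitrary (possibly non-.+1) dimension *)
Definition mpow (n : nat) (A : 'M[C]_n) (k : nat) : 'M[C]_n :=
  iter k (mulmx A) 1%:M.

Definition weylU (N k l : nat) : 'M[C]_N :=
  mpow (shiftX N) k *m mpow (clockZ N) l.

Definition mconj (n m : nat) (A : 'M[C]_(n, m)) : 'M[C]_(n, m) :=
  map_mx (@conjc R) A.

(* superoperator of rho |-> K rho K^dagger : K (x) conj(K), acting on
   |A>> = sum A_ij |i>|j>, with |i>|j> at index mxtens_index (i, j) *)
Definition superop (N : nat) (K : 'M[C]_N) : 'M[C]_(N * N) :=
  tensmx K (mconj K).

Definition lindL (N k l : nat) : 'M[C]_(N * N) :=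
  superop (weylU N k l) - 1%:M.

Definition classK (N k : nat) : 'M[C]_N := mpow (shiftX N) k - 1%:M.

Definition hyperdec (N : nat) (M : 'M[C]_(N * N)) : 'M[C]_N :=
  \matrix_(i, j) M (mxtens_index (i, i)) (mxtens_index (j, j)).

Definition expPartial (n : nat) (A : 'M[C]_n) (m : nat) : 'M[C]_n :=
  \sum_(k < m) (k`!%:R)^-1 *: mpow A k.

(* matrix exponential: entrywise limit of the partial sums, taken
   separately on real and imaginary parts (R[i] = R x R) *)
Definition mexp (n : nat) (A : 'M[C]_n) : 'M[C]_n :=
  \matrix_(i, j)
    (limn (fun m => complex.Re (expPartial A m i j)) +i*
     limn (fun m => complex.Im (expPartial A m i j))).

Definition quantumGen (N : nat) (t : nat -> nat -> R) : 'M[C]_(N * N) :=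
  \sum_(k < N) \sum_(l < N | ((k != 0 :> nat) || (l != 0 :> nat)))
     (t k l)%:C *: lindL N k l.

Definition classicalGen (N : nat) (t : nat -> R) : 'M[C]_N :=
  \sum_(1 <= k < N) (t k)%:C *: classK N k.

Definition inAC (N : nat) (P : 'M[C]_N) : Prop :=
  exists t : nat -> R, (forall k : nat, 0 <= t k) /\ P = mexp (classicalGen N t).

End Defs.

From HB Require Import structures.
From mathcomp Require Import all_boot all_order all_algebra.
From mathcomp Require Import reals topology normedtype sequences exp trigo.
From mathcomp Require Import complex mxtens boolp.
Import Order.TTheory GRing.Theory Num.Theory.
Local Open Scope ring_scope.

(* For a Weyl unitary U = X^k Z^l the superoperator U (x) conj U sends |jj> to
   |omega^(jl)|^2 |j+k, j+k> = |j+k, j+k>.  Hence every L_kl, and so G, leaves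
   the span of the |jj> invariant and acts on it as X^k - I.  Hyper-decoherence
   is multiplicative on superoperators with this invariant span, so it commutes
   with their powers, with every partial sum of the exponential series, and
   hence with the exponential, which is defined as the limit of these sums. *)

Lemma sum_mxtens_index (V : nmodType) m n (F : 'I_(m * n) -> V) :
  \sum_(k < m * n) F k = \sum_(a < m) \sum_(b < n) F (@mxtens_index m n (a, b)).
Proof.
rewrite pair_big (reindex (@mxtens_index m n)) /=.
  by apply: eq_bigr => -[].
exists (@mxtens_unindex m n) => x _.
  exact: mxtens_indexK.
exact: mxtens_unindexK.
Qed.

Section HyperDecoherence.
Local Open Scope complex_scope.
Variable R : realType.
Local Notation C := R[i].

Lemma mpowS n (A : 'M[C]_n) k : mpow A k.+1 = A *m mpow A k.
Proof. by []. Qed.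

Lemma omega_mul_conj N : omega R N * (omega R N)^* = 1.
Proof.
apply/eqP; rewrite eq_complex /=.
by rewrite mulrN opprK -!expr2 cos2Dsin2 eqxx /= mulrN mulrC addNr.
Qed.

Variable N : nat.
Hypothesis N_gt0 : (0 < N)%N.
Local Notation idx := (@mxtens_index N N).
Implicit Types A B : 'M[C]_(N * N).

Lemma shiftX_mpowE k (i j : 'I_N) :
  mpow (shiftX R N) k i j = ((i : nat) == (j + k) %% N)%N%:R.
Proof.
elim: k i => [|k IHk] i; first by rewrite !mxE addn0 modn_small.
have jk_lt : ((j + k) %% N < N)%N by rewrite ltn_pmod.
rewrite mpowS mxE (bigD1 (Ordinal jk_lt)) //= big1 ?addr0 => [|r r_neq].
  by rewrite !mxE IHk eqxx mulr1 -addn1 modnDml addn1 addnS.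
rewrite IHk mxE; case: (r =P ((j + k) %% N)%N :> nat) => [r_eq|_].
  by case/eqP: r_neq; apply: val_inj.
by rewrite mulr0.
Qed.

Lemma clockZ_mpowE l (i j : 'I_N) :
  mpow (clockZ R N) l i j = ((i : nat) == j)%:R * (omega R N ^+ i) ^+ l.
Proof.
elim: l i => [|l IHl] i; first by rewrite !mxE expr0 mulr1.
rewrite mpowS mxE (bigD1 i) //= big1 ?addr0 => [|r r_neq].
  by rewrite !mxE IHl eqxx mul1r exprS mulrCA.
by rewrite mxE val_eqE eq_sym (negbTE r_neq) !mul0r.
Qed.

Lemma weylUE k l (i j : 'I_N) :
  weylU R N k l i j = ((i : nat) == (j + k) %% N)%N%:R * (omega R N ^+ j) ^+ l.
Proof.
rewrite mxE (bigD1 j) //= big1 ?addr0 => [|r r_neq].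
  by rewrite shiftX_mpowE clockZ_mpowE eqxx mul1r.
by rewrite clockZ_mpowE val_eqE (negbTE r_neq) mul0r mulr0.
Qed.

Lemma superop_weylUE k l (a b c d : 'I_N) :
  superop (weylU R N k l) (idx (a, b)) (idx (c, d)) =
  weylU R N k l a c * (weylU R N k l b d)^*.
Proof. by rewrite /superop tensmxE; congr (_ * _); rewrite mxE. Qed.

Definition diag_preserving (M : 'M[C]_(N * N)) : Prop :=
  forall j a b : 'I_N, a != b -> M (idx (a, b)) (idx (j, j)) = 0.

Lemma diag_preserving0 : diag_preserving 0.
Proof. by move=> j a b _; rewrite mxE. Qed.

Lemma diag_preserving1 : diag_preserving 1%:M.
Proof.
move=> j a b a_neq_b; rewrite mxE (inj_eq (can_inj (@mxtens_indexK N N))).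
rewrite xpair_eqE; have [a_eq|//] := eqVneq a j.
by rewrite -a_eq eq_sym (negbTE a_neq_b).
Qed.

Lemma diag_preservingD A B :
  diag_preserving A -> diag_preserving B -> diag_preserving (A + B).
Proof. by move=> dA dB j a b ab; rewrite mxE dA // dB // addr0. Qed.

Lemma diag_preservingB A B :
  diag_preserving A -> diag_preserving B -> diag_preserving (A - B).
Proof. by move=> dA dB j a b ab; rewrite !mxE dA // dB // subrr. Qed.

Lemma diag_preservingZ c A : diag_preserving A -> diag_preserving (c *: A).
Proof. by move=> dA j a b ab; rewrite mxE dA // mulr0. Qed.

Lemma mulmx_diag_colE A B r (j : 'I_N) : diag_preserving B ->
  (A *m B) r (idx (j, j)) =
  \sum_(c < N) A r (idx (c, c)) * B (idx (c, c)) (idx (j, j)).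
Proof.
move=> dB; rewrite mxE sum_mxtens_index.
apply: eq_bigr => a _; rewrite (bigD1 a) //= big1 ?addr0 // => b b_neq.
by rewrite dB ?mulr0 // eq_sym.
Qed.

Lemma diag_preservingM A B :
  diag_preserving A -> diag_preserving B -> diag_preserving (A *m B).
Proof.
move=> dA dB j a b ab; rewrite mulmx_diag_colE // big1 // => c _.
by rewrite dA ?mul0r.
Qed.

Lemma diag_preserving_mpow A k :
  diag_preserving A -> diag_preserving (mpow A k).
Proof.
move=> dA; elim: k => [|k IHk]; first exact: diag_preserving1.
by rewrite mpowS; apply: diag_preservingM.
Qed.

Lemma hyperdec_is_linear : linear (@hyperdec R N).
Proof. by move=> c A B; apply/matrixP => i j; rewrite !mxE. Qed.

HB.instance Definition _ :=
  GRing.isLinear.Build C 'M[C]_(N * N) 'M[C]_N _ (@hyperdec R N)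
    hyperdec_is_linear.

Lemma hyperdec1 : hyperdec 1%:M = 1%:M :> 'M[C]_N.
Proof.
apply/matrixP => i j; rewrite !mxE (inj_eq (can_inj (@mxtens_indexK N N))).
by rewrite xpair_eqE andbb.
Qed.

Lemma hyperdec_mul A B : diag_preserving B ->
  hyperdec (A *m B) = hyperdec A *m hyperdec B.
Proof.
move=> dB; apply/matrixP => i j; rewrite [LHS]mxE mulmx_diag_colE // mxE.
by apply: eq_bigr => c _; rewrite !mxE.
Qed.

Lemma hyperdec_mpow A k : diag_preserving A ->
  hyperdec (mpow A k) = mpow (hyperdec A) k.
Proof.
move=> dA; elim: k => [|k IHk]; first exact: hyperdec1.
by rewrite !mpowS hyperdec_mul ?IHk //; apply: diag_preserving_mpow.
Qed.

Lemma hyperdec_expPartial A m : diag_preserving A ->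
  hyperdec (expPartial A m) = expPartial (hyperdec A) m.
Proof.
move=> dA; rewrite linear_sum; apply: eq_bigr => k _.
by rewrite linearZ /= hyperdec_mpow.
Qed.

Lemma hyperdec_mexp A : diag_preserving A ->
  hyperdec (mexp A) = mexp (hyperdec A).
Proof.
move=> dA; apply/matrixP => i j; rewrite !mxE.
have partialE m : expPartial A m (idx (i, i)) (idx (j, j)) =
                  expPartial (hyperdec A) m i j.
  by rewrite -hyperdec_expPartial // mxE.
by congr (_ +i* _); under eq_fun do rewrite partialE.
Qed.

Lemma diag_preserving_superop_weylU k l :
  diag_preserving (superop (weylU R N k l)).
Proof.
move=> j a b ab; rewrite superop_weylUE !weylUE.
have [a_eq|] := eqP; last by rewrite !mul0r.
have [b_eq|] := eqP; last by rewrite mul0r rmorph0 mulr0.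
by case/eqP: ab; apply: val_inj; rewrite /= a_eq b_eq.
Qed.

Lemma hyperdec_superop_weylU k l :
  hyperdec (superop (weylU R N k l)) = mpow (shiftX R N) k.
Proof.
apply/matrixP => i j; rewrite mxE superop_weylUE weylUE shiftX_mpowE.
rewrite rmorphM mulrACA !rmorphXn -!exprMn omega_mul_conj !expr1n mulr1.
by rewrite rmorph_nat; case: eqP; rewrite ?mulr1 ?mulr0.
Qed.

Lemma diag_preserving_lindL k l : diag_preserving (lindL R N k l).
Proof.
exact/diag_preservingB/diag_preserving1/diag_preserving_superop_weylU.
Qed.

Lemma hyperdec_lindL k l : hyperdec (lindL R N k l) = classK R N k.
Proof. by rewrite linearB /= hyperdec_superop_weylU hyperdec1. Qed.

Lemma classK0 : classK R N 0 = 0.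
Proof. exact: subrr. Qed.

Lemma diag_preserving_quantumGen (t : nat -> nat -> R) :
  diag_preserving (quantumGen N t).
Proof.
apply: (big_ind diag_preserving diag_preserving0 diag_preservingD) => k _.
apply: (big_ind diag_preserving diag_preserving0 diag_preservingD) => l _.
exact/diag_preservingZ/diag_preserving_lindL.
Qed.

Lemma classicalGenE (t : nat -> R) :
  classicalGen N t = \sum_(k < N) (t k)%:C *: classK R N k.
Proof.
rewrite /classicalGen -(big_mkord xpredT (fun k => (t k)%:C *: classK R N k)).
by rewrite (big_ltn N_gt0) classK0 scaler0 add0r.
Qed.

Lemma hyperdec_quantumGen (t : nat -> nat -> R) :
  hyperdec (quantumGen N t) = classicalGen N (fun k => \sum_(l < N) t k l).
Proof.
rewrite classicalGenE linear_sum; apply: eq_bigr => k _; rewrite linear_sum.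
under eq_bigr do rewrite linearZ /= hyperdec_lindL.
have [->|k_neq0] := eqVneq (k : nat) 0%N.
  by rewrite classK0 scaler0 big1 // => l _; rewrite scaler0.
by rewrite (eq_bigl xpredT) // rmorph_sum scaler_suml.
Qed.

End HyperDecoherence.

Lemma inAC_mexp_classicalGen (R : realType) N (t : nat -> R) :
  (forall k, (1 <= k < N)%N -> 0 <= t k) -> inAC (mexp (classicalGen N t)).
Proof.
move=> t_ge0; exists (fun k => if (1 <= k < N)%N then t k else 0); split.
  by move=> k; case: ifP => [/t_ge0|].
by congr mexp; apply: eq_big_nat => k kN; rewrite kN.
Qed.

Theorem theorem3 (R : realType) (N : nat) (t : nat -> nat -> R) :
  (2 <= N)%N ->
  (forall k l : nat, (k < N)%N -> (l < N)%N ->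
     ((k != 0)%N || (l != 0)%N) -> 0 <= t k l) ->
  let G := quantumGen N t in
  let tk := fun k : nat => \sum_(l < N) t k l in
  [/\ hyperdec G = classicalGen N tk,
      hyperdec (mexp G) = mexp (hyperdec G),
      hyperdec (mexp G) = mexp (classicalGen N tk)
    & inAC (hyperdec (mexp G))].
Proof.
move=> N_ge2 t_ge0 G tk; have N_gt0 : (0 < N)%N by apply: ltnW.
have hdG : hyperdec G = classicalGen N tk by apply: hyperdec_quantumGen.
have hd_expG : hyperdec (mexp G) = mexp (hyperdec G).
  exact/hyperdec_mexp/diag_preserving_quantumGen.
have hd_expG_classical : hyperdec (mexp G) = mexp (classicalGen N tk).
  by rewrite hd_expG hdG.
split=> //; rewrite hd_expG_classical.
apply: inAC_mexp_classicalGen => k /andP[k_ge1 k_ltN].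
by apply: sumr_ge0 => l _; apply: t_ge0; rewrite // -lt0n k_ge1.
Qed.
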